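(* Let $\mathbb{R}^n$ and $\mathbb{R}^m$ be endowed with arbitrary norms (both denoted $\|\cdot\|$). Suppose $A\in\mathbb{R}^{m\times n}$ has at least two different columns and $f:\mathbb{R}^m\to\mathbb{R}\cup\{\infty\}$ is a differentiable convex function that is $L_f$-smooth and $\mu_f$-strongly convex on $\mathrm{conv}(A)$. Then \[ L_{f,A}\le L_f\cdot\max_{w\in\mathbb{R}^n\setminus\{0\},\ \langle\mathbf{1},w\rangle=0}\frac{\|Aw\|^2}{\|w\|^2},\qquad \mu_{f,A}\ge\frac{\mu_f\cdot\Phi(A)^2}{4\max_{i=1,\dots,n}\|e_i\|^2}, \] and in particular \[ \frac{L_{f,A}}{\mu_{f,A}}\le\frac{L_f}{\mu_f}\cdot\frac{4\max_{i}\|e_i\|^2}{\Phi(A)^2}\cdot\max_{w\in\mathbb{R}^n\setminus\{0\},\ \langle\mathbf{1},w\rangle=0}\frac{\|Aw\|^2}{\|w\|^2}. \]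
   Context: $\mathbf{1}$ is the all-ones vector and $e_i$ the standard basis vectors of $\mathbb{R}^n$. A differentiable convex $f$ is $L_f$-smooth ($L_f>0$) on $S\subseteq\mathrm{dom}(f)$ if $f(v)\le f(u)+\langle\nabla f(u),v-u\rangle+\frac{L_f}{2}\|v-u\|^2$ for all $u,v\in S$, and $\mu_f$-strongly convex ($\mu_f\ge0$) on $S$ if $f(v)\ge f(u)+\langle\nabla f(u),v-u\rangle+\frac{\mu_f}{2}\|v-u\|^2$ for all $u,v\in S$ (norm of $\mathbb{R}^m$). $\Delta_{n-1}=\{x\in\mathbb{R}^n_+:\sum_ix_i=1\}$; $A$ is identified with the set of its columns; $\mathrm{conv}(A)=\{Ax:x\in\Delta_{n-1}\}$; for $u\in\mathrm{conv}(A)$, $Z(u)=\{z\in\Delta_{n-1}:Az=u\}$ and $\mathrm{dist}(x,Z(u))=\min_{z\in Z(u)}\|x-z\|$ (norm of $\mathbb{R}^n$). The relative constants are \[ L_{f,A}=\sup_{u\in\mathrm{conv}(A),\,x\in\Delta_{n-1}\setminus Z(u)}\frac{2(f(Ax)-f(u)-\langle\nabla f(u),Ax-u\rangle)}{\mathrm{dist}(x,Z(u))^2}, \] and $\mu_{f,A}$ the same with $\inf$ instead of $\sup$. The facial distance is $\Phi(A)=\min\{\mathrm{dist}(F,\mathrm{conv}(A\setminus F)):F\text{ a face of }\mathrm{conv}(A),\ \emptyset\ne F\ne\mathrm{conv}(A)\}$, with $A\setminus F$ the columns of $A$ not in $F$ and $\mathrm{dist}(F,G)=\inf_{u\in F,w\in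 G}\|u-w\|$ (norm of $\mathbb{R}^m$). *)

From mathcomp Require Import all_boot all_order all_algebra.
From mathcomp Require Import all_classical all_reals all_analysis.
Set Implicit Arguments. Unset Strict Implicit. Unset Printing Implicit Defensive.
Import Order.TTheory GRing.Theory Num.Theory.
Import numFieldNormedType.Exports.
Local Open Scope classical_set_scope.
Local Open Scope ring_scope.

Section Defs.
Variable R : realType.

Definition is_norm (k : nat) (N : 'cV[R]_k -> R) : Prop :=
  [/\ (forall x, N x = 0 -> x = 0),
      (forall (a : R) x, N (a *: x) = `|a| * N x) &
      (forall x y, N (x + y) <= N x + N y)].

Definition cvx_set (k : nat) (S : set 'cV[R]_k) : Prop :=
  forall x y (t : R), S x -> S y -> 0 <= t <= 1 -> S (t *: x + (1 - t) *: y).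

Definition cvx_on (k : nat) (S : set 'cV[R]_k) (f : 'cV[R]_k -> R) : Prop :=
  forall x y (t : R), S x -> S y -> 0 <= t <= 1 ->
    f (t *: x + (1 - t) *: y) <= t * f x + (1 - t) * f y.

(* <grad f(u), v - u> written through the (Frechet) differential *)
Definition bregman (m : nat) (f : 'cV[R]_m -> R) (u v : 'cV[R]_m) : R :=
  f v - f u - 'd f u (v - u).

Definition smooth_on (m : nat) (Nm : 'cV[R]_m -> R) (f : 'cV[R]_m -> R)
  (S : set 'cV[R]_m) (L : R) : Prop :=
  forall u v, S u -> S v -> f v <= f u + 'd f u (v - u) + L / 2 * Nm (v - u) ^+ 2.

Definition strongly_convex_on (m : nat) (Nm : 'cV[R]_m -> R) (f : 'cV[R]_m -> R)
  (S : set 'cV[R]_m) (mu : R) : Prop :=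
  forall u v, S u -> S v -> f v >= f u + 'd f u (v - u) + mu / 2 * Nm (v - u) ^+ 2.

Definition simplex {n : nat} : set 'cV[R]_n :=
  [set x | (forall i, 0 <= x i 0) /\ \sum_(i < n) x i 0 = 1].

Definition convhullA (m n : nat) (A : 'M[R]_(m, n)) : set 'cV[R]_m :=
  [set A *m x | x in @simplex n].

Definition Zset (m n : nat) (A : 'M[R]_(m, n)) (u : 'cV[R]_m) : set 'cV[R]_n :=
  [set z | simplex z /\ A *m z = u].

(* dist(x, Z(u)) (the min is attained; inf = min) *)
Definition distZ (m n : nat) (Nn : 'cV[R]_n -> R) (A : 'M[R]_(m, n))
  (x : 'cV[R]_n) (u : 'cV[R]_m) : R :=
  inf [set r | exists z, Zset A u z /\ r = Nn (x - z)].

Definition LfA (m n : nat) (Nn : 'cV[R]_n -> R) (f : 'cV[R]_m -> R)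
  (A : 'M[R]_(m, n)) : \bar R :=
  ereal_sup [set r | exists u x, [/\ convhullA A u, simplex x, ~ Zset A u x &
     r = (2 * bregman f u (A *m x) / distZ Nn A x u ^+ 2)%:E]].

Definition muFA (m n : nat) (Nn : 'cV[R]_n -> R) (f : 'cV[R]_m -> R)
  (A : 'M[R]_(m, n)) : \bar R :=
  ereal_inf [set r | exists u x, [/\ convhullA A u, simplex x, ~ Zset A u x &
     r = (2 * bregman f u (A *m x) / distZ Nn A x u ^+ 2)%:E]].

Definition is_face (k : nat) (C F : set 'cV[R]_k) : Prop :=
  [/\ F `<=` C, cvx_set F &
     forall x y (t : R), C x -> C y -> 0 < t < 1 ->
       F (t *: x + (1 - t) *: y) -> F x /\ F y].

Definition convAminus (m n : nat) (A : 'M[R]_(m, n)) (F : set 'cV[R]_m) : set 'cV[R]_m :=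
  [set A *m x | x in [set x | simplex x /\ (forall j, F (matrix.col j A) -> x j 0 = 0)]].

Definition setdist (m : nat) (Nm : 'cV[R]_m -> R) (F G : set 'cV[R]_m) : R :=
  inf [set r | exists u w, [/\ F u, G w & r = Nm (u - w)]].

(* facial distance Phi(A) (finitely many faces; inf = min) *)
Definition facial_dist (m n : nat) (Nm : 'cV[R]_m -> R) (A : 'M[R]_(m, n)) : R :=
  inf [set r | exists F, [/\ is_face (convhullA A) F, F != set0, F != convhullA A &
     r = setdist Nm F (convAminus A F)]].

(* max_{w <> 0, <1,w> = 0} ||Aw||^2 / ||w||^2  (attained; sup = max) *)
Definition ratio_max (m n : nat) (Nm : 'cV[R]_m -> R) (Nn : 'cV[R]_n -> R)
  (A : 'M[R]_(m, n)) : R :=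
  sup [set r | exists w : 'cV[R]_n, [/\ w != 0, \sum_(i < n) w i 0 = 0 &
     r = Nm (A *m w) ^+ 2 / Nn w ^+ 2]].

Definition max_basis_sq (n : nat) (Nn : 'cV[R]_n -> R) : R :=
  \big[Num.max/0]_(i < n) (Nn (delta_mx i 0) ^+ 2).

End Defs.

From mathcomp Require Import all_boot all_order all_algebra.
From mathcomp Require Import all_classical all_reals all_analysis.
From mathcomp Require Import ring lra.
Import Order.TTheory GRing.Theory Num.Theory.
Import numFieldNormedType.Exports.
Local Open Scope classical_set_scope.
Local Open Scope ring_scope.
Set Implicit Arguments. Unset Strict Implicit. Unset Printing Implicit Defensive.

(* Upper bound: smoothness bounds 2 D_f(u, Ax) by L_f ||A(x - z)||^2, with z a
   ||.||-nearest point of Z(u), and ||A(x - z)||^2 <= ratio_max ||x - z||^2 as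
   <1, x - z> = 0.
   Lower bound: let z be l1-nearest to x in Z(u), and split x - z = p - q into
   positive and negative parts, of equal mass t.  The smallest face G of conv(A)
   containing A(q/t) contains no column a_k with p_k > 0: otherwise A(q/t) is a
   convex combination involving a_k, and trading some mass of q for mass on e_k
   yields a point of Z(u) strictly l1-closer to x.  So A x - u = t (A(p/t) - A(q/t))
   joins G to conv(A \ G), whence Phi(A) ||x - z||_1 <= 2 ||A x - u||; together
   with ||w|| <= max_i ||e_i|| ||w||_1 and strong convexity this gives the bound.
   For the ratio, Phi(A) > 0: each proper face is at positive distance from the
   remaining columns, and only finitely many column index sets occur.
   All minimizers exist by compactness of sublevel sets of Lipschitz penalties. *)

Section Development.
Variable R : realType.

Section Norm.
Variables (k : nat) (N : 'cV[R]_k -> R).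
Hypothesis normN : is_norm N.

Lemma normv0 : N 0 = 0.
Proof. by case: normN => _ hZ _; rewrite -(scale0r 0) hZ normr0 mul0r. Qed.

Lemma normvN x : N (- x) = N x.
Proof. by case: normN => _ hZ _; rewrite -scaleN1r hZ normrN normr1 mul1r. Qed.

Lemma normv_ge0 x : 0 <= N x.
Proof.
case: normN => _ _ hT; have := hT x (- x).
by rewrite subrr normv0 normvN -mulr2n pmulrn_lge0.
Qed.

Lemma normv_distC x y : N (x - y) = N (y - x).
Proof. by rewrite -normvN opprB. Qed.

Lemma normv_le0 x : N x <= 0 -> x = 0.
Proof. by case: normN => h0 _ _ hx; apply: h0; apply/eqP; rewrite eq_le hx normv_ge0. Qed.

Lemma normv_gt0 x : x != 0 -> 0 < N x.
Proof.
move=> x0; rewrite lt_neqAle normv_ge0 andbT eq_sym; apply: contra x0 => /eqP Nx.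
by apply/eqP/normv_le0; rewrite Nx.
Qed.

Lemma ler_normv_sum (I : finType) (F : I -> 'cV[R]_k) : N (\sum_i F i) <= \sum_i N (F i).
Proof.
case: normN => _ _ hT; elim/big_rec2: _ => [|i y1 y2 _ H]; first by rewrite normv0.
by apply: le_trans (hT _ _) _; rewrite lerD2l.
Qed.

Lemma ler_normv_dist x y : `|N x - N y| <= N (x - y).
Proof.
case: normN => _ _ hT; have := hT (x - y) y; have := hT (y - x) x.
by rewrite !subrK normv_distC ler_norml => ? ?; apply/andP; split; lra.
Qed.

Lemma mulmx_col_sum p (A : 'M[R]_(k, p)) v : A *m v = \sum_i v i 0 *: col i A.
Proof.
rewrite {1}[v]matrix_sum_delta mulmx_sumr; apply: eq_bigr => i _.
by rewrite big_ord1 -scalemxAr colE.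
Qed.

Lemma ler_normv_mulmx p (A : 'M[R]_(k, p)) v :
  N (A *m v) <= \sum_i `|v i 0| * N (col i A).
Proof.
case: normN => _ hZ _; rewrite mulmx_col_sum; apply: le_trans (ler_normv_sum _) _.
by apply: ler_sum => i _; rewrite hZ.
Qed.

Lemma ler_normv_l1 v : N v <= \sum_i `|v i 0| * N (delta_mx i 0).
Proof.
have := ler_normv_mulmx 1%:M v; rewrite mul1mx; congr (_ <= _).
by apply: eq_bigr => i _; rewrite colE mul1mx.
Qed.

End Norm.

Definition l1norm k (v : 'cV[R]_k) : R := \sum_i `|v i 0|.

Lemma l1norm_ge0 k (v : 'cV[R]_k) : 0 <= l1norm v.
Proof. exact: sumr_ge0. Qed.

Lemma ler_coord_l1norm k (v : 'cV[R]_k) i : `|v i 0| <= l1norm v.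
Proof. by rewrite /l1norm (bigD1 i) //= lerDl sumr_ge0. Qed.

Lemma l1normZ k (a : R) (v : 'cV[R]_k) : l1norm (a *: v) = `|a| * l1norm v.
Proof. by rewrite /l1norm mulr_sumr; apply: eq_bigr => i _; rewrite mxE normrM. Qed.

Lemma l1norm_eq0 k (v : 'cV[R]_k) : l1norm v = 0 -> v = 0.
Proof.
move=> /eqP; rewrite psumr_eq0 // => /allP v0; apply/matrixP => i j.
by rewrite (ord1 j) mxE; apply/eqP; rewrite -normr_eq0; apply: v0; rewrite mem_index_enum.
Qed.

Lemma l1norm_is_norm k : is_norm (@l1norm k).
Proof.
split; [exact: l1norm_eq0 | exact: l1normZ | move=> x y].
by rewrite -big_split; apply: ler_sum => i _; rewrite mxE ler_normD.
Qed.

Definition coord_lipschitz k (g : 'cV[R]_k -> R) :=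
  exists2 C : R, 0 <= C & forall (x y : 'cV[R]_k) (e : R), 0 <= e ->
    (forall i, `|x i 0 - y i 0| <= e) -> `|g x - g y| <= C * e.

Section Lipschitz.
Variable k : nat.
Implicit Types g h : 'cV[R]_k -> R.

Lemma lipschitzD g h :
  coord_lipschitz g -> coord_lipschitz h -> coord_lipschitz (fun z => g z + h z).
Proof.
move=> [C1 C10 h1] [C2 C20 h2]; exists (C1 + C2); first exact: addr_ge0.
move=> x y e e0 he; rewrite mulrDl.
apply: le_trans (lerD (h1 _ _ _ e0 he) (h2 _ _ _ e0 he)).
by rewrite (_ : _ - _ = (g x - g y) + (h x - h y)); [exact: ler_normD | ring].
Qed.

Lemma lipschitz_sum (I : finType) (P : pred I) (g : I -> 'cV[R]_k -> R) :
  (forall i, coord_lipschitz (g i)) -> coord_lipschitz (fun z => \sum_(i | P i) g i z).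
Proof.
move=> hg; exists (\sum_(i | P i) s2val (cid2 (hg i))).
  by apply: sumr_ge0 => i _; case: (cid2 (hg i)).
move=> x y e e0 he; rewrite -sumrB mulr_suml; apply: le_trans (ler_norm_sum _ _ _) _.
by apply: ler_sum => i _; case: (cid2 (hg i)) => C /= _; apply.
Qed.

Lemma lipschitz_coord (phi : R -> R) (i : 'I_k) (L : R) :
  0 <= L -> (forall a b, `|phi a - phi b| <= L * `|a - b|) ->
  coord_lipschitz (fun z => phi (z i 0)).
Proof.
by move=> L0 hphi; exists L => // x y e _ he; apply: le_trans (hphi _ _) (ler_wpM2l L0 (he i)).
Qed.

Lemma lipschitz_normrB g (b : R) : coord_lipschitz g -> coord_lipschitz (fun z => `|g z - b|).
Proof.
move=> [C C0 hC]; exists C => // x y e e0 he; apply: le_trans (ler_dist_dist _ _) _.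
have -> : g x - b - (g y - b) = g x - g y by ring.
exact: hC.
Qed.

Lemma lipschitz_reflect g (x : 'cV[R]_k) :
  coord_lipschitz g -> coord_lipschitz (fun z => g (x - z)).
Proof.
move=> [C C0 hC]; exists C => // y z e e0 he; apply: hC => // i.
rewrite !mxE (_ : _ - _ = - (y i 0 - z i 0)) ?normrN; [exact: he | ring].
Qed.

Lemma lipschitz_l1norm : coord_lipschitz (@l1norm k).
Proof.
apply: lipschitz_sum => i; apply: (@lipschitz_coord _ i 1) => // a b.
by rewrite mul1r ler_dist_dist.
Qed.

Lemma lipschitz_normv_affine m (N : 'cV[R]_m -> R) (A : 'M[R]_(m, k)) (c : 'cV[R]_m) :
  is_norm N -> coord_lipschitz (fun z => N (A *m z - c)).
Proof.
move=> normN; exists (\sum_i N (col i A)); first by apply: sumr_ge0 => i _; exact: normv_ge0.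
move=> x y e e0 he; apply: le_trans (ler_normv_dist normN _ _) _.
have -> : A *m x - c - (A *m y - c) = A *m (x - y).
  by rewrite mulmxBr opprB addrA subrK.
apply: le_trans (ler_normv_mulmx normN _ _) _; rewrite mulr_suml.
apply: ler_sum => i _; rewrite mulrC ler_wpM2l ?normv_ge0 //.
by have := he i; rewrite !mxE.
Qed.

Lemma lipschitz_normv (N : 'cV[R]_k -> R) : is_norm N -> coord_lipschitz N.
Proof.
move=> normN; have := lipschitz_normv_affine 1%:M 0 normN.
by congr coord_lipschitz; apply: funext => z; rewrite mul1mx subr0.
Qed.

Lemma lipschitz_normv_dist (N : 'cV[R]_k -> R) (x : 'cV[R]_k) :
  is_norm N -> coord_lipschitz (fun z => N (x - z)).
Proof. by move=> normN; apply: lipschitz_reflect; exact: lipschitz_normv. Qed.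

Lemma lipschitz_continuous_rV g : coord_lipschitz g -> continuous (fun r : 'rV[R]_k => g r^T).
Proof.
case=> C C0 hC r; apply/(@cvgrPdist_lt _ _ _ _ (nbhs_filter r)) => eps eps0.
have C1 : 0 < C + 1 by rewrite ltr_wpDl.
have d0 : 0 < eps / (C + 1) by rewrite divr_gt0.
have : \forall s \near r, forall i, `|r ord0 i - (s : 'rV[R]_k) ord0 i| < eps / (C + 1).
  by apply/nbhs_ballP; exists (eps / (C + 1)) => //= s [_ H] i; exact: H.
apply: filterS => s Hs /=; apply: le_lt_trans (hC _ _ _ (ltW d0) _) _.
  by move=> i; rewrite !mxE ltW.
by rewrite mulrA ltr_pdivrMr // mulrDr mulr1 mulrC ltrDl.
Qed.

(* Compactness of closed bounded sets is only available for row vectors. *)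
Lemma sublevel_argmin h g (B : R) :
  coord_lipschitz h -> coord_lipschitz g -> (exists z, h z <= 0) ->
  (forall z, h z <= 0 -> forall i, `|z i 0| <= B) ->
  exists z, h z <= 0 /\ forall y, h y <= 0 -> g z <= g y.
Proof.
move=> hl gl [z0 hz0] hB; pose K := [set r : 'rV[R]_k | h r^T <= 0].
have Kcl : closed K.
  apply: (@preimage_closed _ _ (fun r : 'rV[R]_k => h r^T) [set x | x <= 0]).
    by move=> x _; apply: lipschitz_continuous_rV.
  exact: closed_le.
have Kb : bounded_set K.
  rewrite /bounded_set /= /bounded_near; near=> M => r Kr /=.
  rewrite [`|r|]mx_normrE; apply: bigmax_le => //= -[i j] _ /=.
  rewrite (ord1 i); apply: le_trans (_ : B <= M); first by have := hB _ Kr j; rewrite mxE.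
  by near: M; apply: nbhs_pinfty_ge; exact: num_real.
have K0 : K !=set0 by exists z0^T; rewrite /K /= trmxK.
have [c cK cmin] := compact_EVT_min K0 (bounded_closed_compact Kb Kcl)
  (continuous_subspaceT (lipschitz_continuous_rV gl)).
exists c^T; split; first by move: cK; rewrite inE.
by move=> y hy; have := cmin y^T; rewrite trmxK; apply; rewrite inE /K /= trmxK.
Unshelve. all: by end_near.
Qed.

End Lipschitz.

Section Simplex.
Variable n : nat.
Implicit Types (x l v : 'cV[R]_n) (I : {set 'I_n}).

Lemma sum_delta_mx (j : 'I_n) : \sum_i (delta_mx j 0 : 'cV[R]_n) i 0 = 1.
Proof.
rewrite (bigD1 j) //= big1 ?addr0; first by rewrite mxE !eqxx.
by move=> i /negbTE hij; rewrite mxE hij.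
Qed.

Lemma simplex_delta (j : 'I_n) : simplex (delta_mx j 0 : 'cV[R]_n).
Proof. by split; [move=> i; rewrite mxE ler0n | exact: sum_delta_mx]. Qed.

Lemma simplex_le1 x j : simplex x -> x j 0 <= 1.
Proof. by case=> x0 <-; rewrite (bigD1 j) //= lerDl sumr_ge0. Qed.

Lemma simplex_cvx : cvx_set (@simplex R n).
Proof.
move=> x y t [x0 x1] [y0 y1] /andP[t0 t1]; split.
  by move=> i; rewrite !mxE addr_ge0 ?mulr_ge0 ?subr_ge0.
rewrite (eq_bigr (fun i => t * x i 0 + (1 - t) * y i 0)); last by move=> i _; rewrite !mxE.
by rewrite big_split /= -!mulr_sumr x1 y1; ring.
Qed.

Lemma simplex_exists_gt0 x : simplex x -> exists j, 0 < x j 0.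
Proof.
move=> [x0 x1]; apply/not_existsP => xle0; move: x1; rewrite big1 => [/eqP|i _].
  by rewrite eq_sym oner_eq0.
by apply/eqP; rewrite eq_le x0 andbT leNgt; apply/negP/xle0.
Qed.

Lemma sum_simplex_subr x z : simplex x -> simplex z -> \sum_i (x - z) i 0 = 0.
Proof.
move=> [_ x1] [_ z1].
by rewrite (eq_bigr (fun i => x i 0 - z i 0)) ?sumrB ?x1 ?z1 ?subrr // => i _; rewrite !mxE.
Qed.

Lemma simplex_normalize v :
  (forall i, 0 <= v i 0) -> 0 < \sum_i v i 0 -> simplex ((\sum_i v i 0)^-1 *: v).
Proof.
move=> v0 t0; split; first by move=> i; rewrite mxE mulr_ge0 // invr_ge0 ltW.
rewrite (eq_bigr (fun i => (\sum_i v i 0)^-1 * v i 0)); last by move=> i _; rewrite mxE.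
by rewrite -mulr_sumr mulVf // gt_eqF.
Qed.

Lemma sum_supported I v :
  (forall i, i \notin I -> v i 0 = 0) -> \sum_(i in I) v i 0 = \sum_i v i 0.
Proof. by move=> v0; rewrite big_mkcond; apply: eq_bigr => i _; case: ifPn => // /v0. Qed.

(* Constraint sets are presented as sublevel sets [h <= 0] of coordinate-Lipschitz
   penalties [h], so that [sublevel_argmin] applies to them. *)
Definition sign_penalty I (b : R) v : R :=
  \sum_i (`|v i 0| - (if i \in I then v i 0 else - v i 0))
  + `|\sum_(i in I) v i 0 - 1| + `|\sum_(i in ~: I) v i 0 - b|.

Lemma sign_term_ge0 (c : bool) (a : R) : 0 <= `|a| - (if c then a else - a).
Proof. by rewrite subr_ge0; case: c; rewrite ?ler_norm // -normrN ler_norm. Qed.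

Lemma sign_penalty_ge0 I b v : 0 <= sign_penalty I b v.
Proof. by rewrite !addr_ge0 // sumr_ge0 // => i _; exact: sign_term_ge0. Qed.

Lemma sign_penalty_le0P I b v : sign_penalty I b v <= 0 <->
  [/\ forall i, i \in I -> 0 <= v i 0, forall i, i \notin I -> v i 0 <= 0,
      \sum_(i in I) v i 0 = 1 & \sum_(i in ~: I) v i 0 = b].
Proof.
have term_ge0 i := sign_term_ge0 (i \in I) (v i 0).
split=> [hv|[vI vIc sI sIc]].
  move: hv; rewrite /sign_penalty; set S := \sum_i _ => hv.
  have hsum : 0 <= S by apply: sumr_ge0 => i _; exact: term_ge0.
  have := normr_ge0 (\sum_(i in I) v i 0 - 1); have := normr_ge0 (\sum_(i in ~: I) v i 0 - b).
  move=> n2 n1.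
  have /eqP/(psumr_eq0P (fun i _ => term_ge0 i)) S0 : S == 0 by rewrite eq_le hsum andbT; lra.
  have abs_eq i : `|v i 0| = if i \in I then v i 0 else - v i 0.
    by apply/eqP; rewrite -subr_eq0; apply/eqP/S0.
  split.
  - by move=> i iI; have := abs_eq i; rewrite iI => <-.
  - by move=> i /negbTE iI; have := abs_eq i; rewrite iI => /eqP; rewrite -ler0_def.
  - by apply/eqP; rewrite -subr_eq0 -normr_eq0 eq_le normr_ge0 andbT; lra.
  - by apply/eqP; rewrite -subr_eq0 -normr_eq0 eq_le normr_ge0 andbT; lra.
rewrite /sign_penalty sI sIc !subrr normr0 !addr0 big1 // => i _.
by case: ifPn => [/vI/ger0_norm|/vIc/ler0_norm] ->; rewrite subrr.
Qed.

Lemma lipschitz_sign_penalty I b : coord_lipschitz (sign_penalty I b).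
Proof.
have lip_sumI (J : {set 'I_n}) : coord_lipschitz (fun v : 'cV[R]_n => \sum_(i in J) v i 0).
  apply: lipschitz_sum => i; apply: (@lipschitz_coord _ id i 1) => // a c.
  by rewrite mul1r.
apply: lipschitzD; [apply: lipschitzD|]; last 2 first.
- exact: lipschitz_normrB.
- exact: lipschitz_normrB.
apply: lipschitz_sum => i.
apply: (@lipschitz_coord _ (fun a => `|a| - if i \in I then a else - a) _ 2) => // a c.
have -> : `|a| - (if i \in I then a else - a) - (`|c| - (if i \in I then c else - c)) =
    (`|a| - `|c|) - (if i \in I then a - c else - (a - c)) by case: ifP => _; ring.
apply: le_trans (ler_normB _ _) _; have := ler_dist_dist a c.
by case: ifP => _; rewrite ?normrN; lra.
Qed.

Lemma sign_penalty_coord_le I b v i : sign_penalty I b v <= 0 -> `|v i 0| <= 1 + `|b|.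
Proof.
move=> /sign_penalty_le0P[vI vIc sI sIc].
have := normr_ge0 b; have : - b <= `|b| by rewrite -normrN ler_norm.
case: (boolP (i \in I)) => iI.
  have : 0 <= \sum_(j in I | j != i) v j 0 by apply: sumr_ge0 => j /andP[/vI].
  move: sI; rewrite (ger0_norm (vI i iI)) (bigD1 i) //=; lra.
have : \sum_(j in ~: I | j != i) v j 0 <= 0.
  by apply: sumr_le0 => j /andP[]; rewrite inE => /vIc.
move: sIc; rewrite (ler0_norm (vIc i iI)) (bigD1 i) ?inE //=; lra.
Qed.

Lemma simplex_sign_penaltyP x : simplex x <-> sign_penalty [set: 'I_n]%SET 0 x <= 0.
Proof.
have sumT : \sum_(i in [set: 'I_n]%SET) x i 0 = \sum_i x i 0.
  by apply: eq_bigl => i; rewrite !inE.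
rewrite sign_penalty_le0P sumT; split=> [[x0 x1]|[x0 _ x1 _]].
  split=> // [i|]; first by rewrite !inE.
  by rewrite big_pred0 // => i; rewrite !inE.
by split=> // i; apply: x0; rewrite !inE.
Qed.

Lemma simplex_diff_sign_penaltyP I v : sign_penalty I (-1) v <= 0 <->
  exists l mu, [/\ simplex l, simplex mu, (forall i, i \notin I -> l i 0 = 0),
                   (forall i, i \in I -> mu i 0 = 0) & v = l - mu].
Proof.
rewrite sign_penalty_le0P; split=> [[vI vIc sI sIc]|[l [mu [[l0 l1] [m0 m1] lI mI ->]]]].
  exists (\col_i (if i \in I then v i 0 else 0)), (\col_i (if i \in I then 0 else - v i 0)).
  split.
  - split=> [i|]; first by rewrite mxE; case: ifP => // /vI.
    by rewrite -sI [RHS]big_mkcond; apply: eq_bigr => i _; rewrite mxE.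
  - split=> [i|]; first by rewrite mxE; case: ifPn => // /vIc; rewrite oppr_ge0.
    rewrite -[1]opprK -sIc -sumrN [RHS]big_mkcond; apply: eq_bigr => i _.
    by rewrite mxE inE; case: ifP.
  - by move=> i /negbTE iI; rewrite mxE iI.
  - by move=> i iI; rewrite mxE iI.
  - by apply/matrixP => i j; rewrite (ord1 j) !mxE; case: ifP => _; ring.
have vE i : (l - mu) i 0 = if i \in I then l i 0 else - mu i 0.
  by rewrite !mxE; case: ifPn => [/mI|/lI] ->; rewrite ?subr0 ?sub0r.
split.
- by move=> i iI; rewrite vE iI.
- by move=> i iI; rewrite vE (negbTE iI) oppr_le0.
- by rewrite -l1 -(sum_supported lI); apply: eq_bigr => i iI; rewrite vE iI.
- have -> : -1 = \sum_(i in ~: I) - mu i 0.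
    by rewrite sumrN (@sum_supported (~: I) mu) ?m1 // => i; rewrite inE negbK => /mI.
  by apply: eq_bigr => i; rewrite inE => /negbTE iI; rewrite vE iI.
Qed.

End Simplex.

(* The smallest face of the convex set [C] containing [p]. *)
Definition minface m (C : set 'cV[R]_m) (p : 'cV[R]_m) : set 'cV[R]_m :=
  [set y | C y /\ exists2 e : R, 0 < e & C (p + e *: (p - y))].

Section MinFace.
Variables (m : nat) (C : set 'cV[R]_m) (p : 'cV[R]_m).
Hypotheses (cvxC : cvx_set C) (Cp : C p).

Lemma minface_self : minface C p p.
Proof. by split=> //; exists 1 => //; rewrite subrr scaler0 addr0. Qed.

Lemma minface_segment_l x y s : C x -> C y -> 0 < s < 1 ->
  minface C p (s *: x + (1 - s) *: y) -> minface C p x.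
Proof.
move=> Cx Cy /andP[s0 s1] [_ [e e0 Ce]]; split=> //.
have d0 : 0 < 1 + e * (1 - s) by rewrite ltr_wpDr // ?mulr_ge0 // ?ltW // subr_gt0.
exists (e * s / (1 + e * (1 - s))); first by rewrite divr_gt0 // mulr_gt0.
set c := p + _ in Ce; set t := (1 + e * (1 - s))^-1.
have -> : p + e * s / (1 + e * (1 - s)) *: (p - x) = t *: c + (1 - t) *: y.
  by rewrite /c /t; apply/matrixP => i j; rewrite !mxE; field; rewrite gt_eqF.
apply: cvxC => //; rewrite invr_ge0 ltW //= invf_le1 //.
by rewrite lerDl mulr_ge0 // ?ltW // subr_gt0.
Qed.

Lemma minface_is_face : is_face C (minface C p).
Proof.
split=> [y []//| y1 y2 s [C1 [e1 e10 Ce1]] [C2 [e2 e20 Ce2]] s01 | x y t Cx Cy t01 Fw].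
- split; first exact: cvxC.
  have shrink y e e' : 0 < e' -> e <= e' -> 0 <= e -> C (p + e' *: (p - y)) -> C (p + e *: (p - y)).
    move=> e'0 ee' e0 Cy.
    have -> : p + e *: (p - y) = (e / e') *: (p + e' *: (p - y)) + (1 - e / e') *: p.
      by apply/matrixP => i j; rewrite !mxE; field; rewrite gt_eqF.
    apply: cvxC => //; apply/andP; split; first by rewrite divr_ge0 // ltW.
    by rewrite ler_pdivrMr // mul1r.
  have e0 : 0 < Num.min e1 e2 by rewrite lt_min e10 e20.
  exists (Num.min e1 e2) => //.
  have -> : p + Num.min e1 e2 *: (p - (s *: y1 + (1 - s) *: y2)) =
      s *: (p + Num.min e1 e2 *: (p - y1)) + (1 - s) *: (p + Num.min e1 e2 *: (p - y2)).
    by apply/matrixP => i j; rewrite !mxE; ring.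
  by apply: cvxC => //; [apply: (shrink _ _ e1) | apply: (shrink _ _ e2)];
    rewrite ?ge_min ?lexx ?orbT // ltW.
- split; first exact: minface_segment_l Fw.
  apply: (@minface_segment_l _ x (1 - t)) => //; first by move: t01 => /andP[? ?]; apply/andP; lra.
  by rewrite (_ : 1 - (1 - t) = t) 1?addrC //; ring.
Qed.

End MinFace.

Section Polytope.
Variables (m n : nat) (A : 'M[R]_(m, n)).
Implicit Types (l x z : 'cV[R]_n) (F : set 'cV[R]_m).

Lemma convhullA_col j : convhullA A (col j A).
Proof. by exists (delta_mx j 0); [exact: simplex_delta | rewrite colE]. Qed.

Lemma convhullA_cvx : cvx_set (convhullA A).
Proof.
move=> _ _ t [x sx <-] [y sy <-] t01; exists (t *: x + (1 - t) *: y).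
  exact: simplex_cvx.
by rewrite mulmxDr !scalemxAr.
Qed.

Lemma mulmx_simplex_split l j (a : R) : simplex l -> 0 <= a <= l j 0 -> a < 1 ->
  exists2 mu, simplex mu & [/\ A *m l = a *: col j A + (1 - a) *: (A *m mu),
    (forall i, l i 0 = 0 -> mu i 0 = 0) & (a = l j 0 -> mu j 0 = 0)].
Proof.
move=> [l0 l1] /andP[a0 al] a1; have ha : 0 < 1 - a by rewrite subr_gt0.
pose mu := (1 - a)^-1 *: (l - a *: delta_mx j 0).
have muE i : mu i 0 = (1 - a)^-1 * (l i 0 - a * (i == j)%:R).
  by rewrite !mxE eqxx andbT.
exists mu; [split|split].
- move=> i; rewrite muE; apply: mulr_ge0; first by rewrite invr_ge0 ltW.
  by have [->|_] := eqVneq i j; rewrite ?mulr1 ?mulr0 ?subr0 ?subr_ge0.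
- rewrite (eq_bigr _ (fun i _ => muE i)) -mulr_sumr sumrB l1 -mulr_sumr.
  have -> : \sum_i ((i == j)%:R : R) = 1.
    by rewrite -[RHS](sum_delta_mx j); apply: eq_bigr => i _; rewrite mxE eqxx andbT.
  by rewrite mulr1 mulVf // gt_eqF.
- rewrite /mu -scalemxAr scalerA mulfV ?gt_eqF // scale1r mulmxBr -scalemxAr -colE.
  by rewrite addrC subrK.
- move=> i li; rewrite muE li; have [eij|_] := eqVneq i j; last by rewrite mulr0 subr0 mulr0.
  have -> : a = 0 by apply/eqP; rewrite eq_le a0 andbT -li eij.
  by rewrite mul0r subrr mulr0.
- by move=> ea; rewrite muE eqxx mulr1 -ea subrr mulr0.
Qed.

Lemma face_col F l j :
  is_face (convhullA A) F -> simplex l -> F (A *m l) -> 0 < l j 0 -> F (col j A).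
Proof.
move=> [_ _ extF] sl Fl lj; have l1 := simplex_le1 j sl.
have a01 : 0 <= l j 0 / 2 <= l j 0 by apply/andP; split; lra.
have [mu smu [lE _ _]] := @mulmx_simplex_split l j (l j 0 / 2) sl a01 (ltac:(lra)).
have Cmu : convhullA A (A *m mu) by exists mu.
have t01 : 0 < l j 0 / 2 < 1 by apply/andP; split; lra.
by case: (extF _ _ _ (convhullA_col j) Cmu t01); rewrite -?lE.
Qed.

Lemma cvx_mulmx_simplex F l : cvx_set F -> simplex l ->
  (forall j, l j 0 != 0 -> F (col j A)) -> F (A *m l).
Proof.
move=> cvxF; move: {2}#|[pred j | l j 0 != 0]| (leqnn #|[pred j | l j 0 != 0]|) => k.
elim: k l => [|k IH] l hk sl hF; have [j lj] := simplex_exists_gt0 sl.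
  by move: hk; rewrite leqn0 => /eqP/card0_eq/(_ j); rewrite !inE gt_eqF.
have := simplex_le1 j sl; rewrite le_eqVlt => /orP[/eqP lj1|lj1].
  have : \sum_(i | i != j) l i 0 = 0.
    move: sl.2; rewrite (bigD1 j) //= lj1 => /(congr1 (fun x : R => x - 1)).
    by rewrite addrC addrK subrr.
  move=> /(psumr_eq0P (fun i _ => sl.1 i)) l0.
  rewrite mulmx_col_sum (bigD1 j) //= big1 ?addr0 => [|i ij]; last by rewrite l0 // scale0r.
  by rewrite lj1 scale1r; apply: hF; rewrite lj1 oner_neq0.
have [mu smu [lE mu0 muj]] := @mulmx_simplex_split l j (l j 0) sl
  (ltac:(apply/andP; split; [exact: ltW | exact: lexx])) lj1.
rewrite lE; apply: cvxF; [by apply: hF; rewrite gt_eqF| |by apply/andP; split; apply: ltW].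
apply: IH => // [|i mui]; last by apply: hF; apply: contra mui => /eqP/mu0 ->.
have hsub : [pred i | mu i 0 != 0] \subset [predD1 [pred i | l i 0 != 0] & j].
  apply/fintype.subsetP => i; rewrite !inE => mui; apply/andP; split.
    by apply: contra mui => /eqP ->; rewrite muj.
  by apply: contra mui => /eqP/mu0 ->.
apply: leq_trans (subset_leq_card hsub) _.
by move: hk; rewrite (cardD1 j [pred i | l i 0 != 0]) inE (gt_eqF lj).
Qed.

Lemma Zset_argmin u g : convhullA A u -> coord_lipschitz g ->
  exists z, Zset A u z /\ forall z', Zset A u z' -> g z <= g z'.
Proof.
move=> [l sl Al] gl; have l1N := l1norm_is_norm m.
pose h z := sign_penalty [set: 'I_n]%SET 0 z + l1norm (A *m z - u).
have hP z : h z <= 0 <-> Zset A u z.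
  rewrite /h; split=> [hz|[sz <-]]; last first.
    by rewrite subrr (normv0 l1N) addr0 -simplex_sign_penaltyP.
  have := sign_penalty_ge0 [set: 'I_n]%SET 0 z; have := l1norm_ge0 (A *m z - u) => n0 p0.
  split; first by apply/simplex_sign_penaltyP; lra.
  by apply/eqP; rewrite -subr_eq0; apply/eqP/(normv_le0 l1N); lra.
have hl : coord_lipschitz h.
  exact: lipschitzD (lipschitz_sign_penalty _ _) (lipschitz_normv_affine A u l1N).
have [|z /hP sz i|z [/hP Zz zmin]] := @sublevel_argmin _ h g 1 hl gl.
- by exists l; apply/hP.
- by rewrite ger0_norm ?(sz.1.1 i) //; exact: simplex_le1 sz.1.
- by exists z; split=> // z' /hP; exact: zmin.
Qed.

Lemma Zset_exchange u z (d w : 'cV[R]_n) (s : R) :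
  Zset A u z -> (forall i, 0 <= d i 0 <= z i 0) -> simplex w ->
  A *m w = (\sum_i d i 0)^-1 *: (A *m d) -> 0 < \sum_i d i 0 -> 0 <= s <= 1 ->
  Zset A u (z - s *: d + (s * \sum_i d i 0) *: w).
Proof.
move=> [[z0 z1] Az] dz [w0 w1] Aw t0 /andP[s0 s1]; set t := \sum_i d i 0 in Aw t0 *.
split; [split|].
- move=> i; rewrite !mxE; have /andP[di dzi] := dz i.
  have : 0 <= s * t * w i 0 by rewrite !mulr_ge0 // ltW.
  have : s * d i 0 <= d i 0 by rewrite ler_piMl.
  lra.
- rewrite (eq_bigr (fun i => z i 0 - s * d i 0 + s * t * w i 0)); last by move=> i _; rewrite !mxE.
  by rewrite !big_split /= sumrN -!mulr_sumr z1 w1 -/t; ring.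
- by rewrite mulmxDr mulmxBr -!scalemxAr Az Aw scalerA mulfK ?gt_eqF // subrK.
Qed.

End Polytope.

Section PosNegParts.
Variable k : nat.
Implicit Types (v p q w : 'cV[R]_k).

Definition posp v : 'cV[R]_k := \col_i ((`|v i 0| + v i 0) / 2).
Definition negp v : 'cV[R]_k := posp (- v).

Lemma posp_ge0 v i : 0 <= posp v i 0.
Proof. by rewrite mxE; have := ler_norm (- v i 0); rewrite normrN; lra. Qed.

Lemma negp_ge0 v i : 0 <= negp v i 0.
Proof. exact: posp_ge0. Qed.

Lemma posp_subr_negp v : posp v - negp v = v.
Proof. by apply/matrixP => i j; rewrite (ord1 j) !mxE normrN; lra. Qed.

Lemma l1norm_posp_negp v : l1norm v = \sum_i posp v i 0 + \sum_i negp v i 0.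
Proof. by rewrite -big_split; apply: eq_bigr => i _ /=; rewrite !mxE normrN; lra. Qed.

Lemma sum_posp_negp v : \sum_i v i 0 = 0 -> \sum_i negp v i 0 = \sum_i posp v i 0.
Proof.
move=> v0; apply/eqP; rewrite eq_sym -subr_eq0 -sumrB; apply/eqP; rewrite -[RHS]v0.
by apply: eq_bigr => i _; rewrite !mxE normrN; lra.
Qed.

Lemma negp_subr_le (x z : 'cV[R]_k) i : 0 <= x i 0 -> 0 <= z i 0 -> negp (x - z) i 0 <= z i 0.
Proof.
move=> x0 z0; rewrite !mxE.
by case: (lerP 0 (- (x i 0 - z i 0))) => [/ger0_norm|/ltr0_norm] ->; lra.
Qed.

(* [Zset_exchange] measured in l1: the mass [theta * (\sum_i q i 0) * a] moved
   onto coordinate [j] cancels against [p], so the distance drops by twice it. *)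
Lemma l1norm_exchange_lt p q w j (a theta : R) :
  (forall i, 0 <= p i 0) -> (forall i, 0 <= q i 0) -> simplex w ->
  0 <= a <= 1 -> 0 <= theta <= 1 -> 0 < theta * (\sum_i q i 0) * a <= p j 0 ->
  l1norm (p - q + theta *: q - (theta * \sum_i q i 0) *: (a *: delta_mx j 0 + (1 - a) *: w))
    < \sum_i p i 0 + \sum_i q i 0.
Proof.
move=> p0 q0 [w0 w1] /andP[a0 a1] /andP[th0 th1]; set t := \sum_i q i 0 => /andP[c0 cp].
have t0 : 0 <= t by apply: sumr_ge0.
have bound i : `|(p - q + theta *: q - (theta * t) *: (a *: delta_mx j 0 + (1 - a) *: w)) i 0|
    <= (p i 0 - theta * t * a * (i == j)%:R) + (1 - theta) * q i 0 + theta * t * (1 - a) * w i 0.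
  have e1 : 0 <= p i 0 - theta * t * a * (i == j)%:R.
    by case: eqP => [->|_]; rewrite ?mulr1 ?mulr0 ?subr0 ?subr_ge0.
  have e2 : 0 <= (1 - theta) * q i 0 by rewrite mulr_ge0 ?subr_ge0.
  have e3 : 0 <= theta * t * (1 - a) * w i 0 by rewrite !mulr_ge0 ?subr_ge0.
  rewrite !mxE eqxx andbT ler_norml; apply/andP; split; lra.
apply: le_lt_trans (ler_sum _ (fun i _ => bound i)) _.
rewrite !big_split /= sumrN -!mulr_sumr w1 -/t.
have -> : \sum_i ((i == j)%:R : R) = 1.
  by rewrite -[RHS](sum_delta_mx j); apply: eq_bigr => i _; rewrite mxE eqxx andbT.
lra.
Qed.

Lemma simplex_sum_negp (x z : 'cV[R]_k) : simplex x -> simplex z ->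
  \sum_i negp (x - z) i 0 = \sum_i posp (x - z) i 0.
Proof.
by move=> sx sz; apply/sum_posp_negp/sum_simplex_subr.
Qed.

End PosNegParts.

Lemma inf_ge0 (E : set R) : (forall r, E r -> 0 <= r) -> 0 <= inf E.
Proof.
move=> E0; have [[r Er]|/set0P/negP/negPn/eqP ->] := pselect (E !=set0); last by rewrite inf0.
by apply: lb_le_inf => [|s /E0]; [exists r|].
Qed.

Section FacialBound.
Variables (m n : nat) (A : 'M[R]_(m, n)).
Implicit Types (x z : 'cV[R]_n) (u : 'cV[R]_m).

Lemma l1_closest_col_notin_minface u x z k :
  simplex x -> Zset A u z -> (forall z', Zset A u z' -> l1norm (x - z) <= l1norm (x - z')) ->
  0 < posp (x - z) k 0 ->
  ~ minface (convhullA A) (A *m ((\sum_i negp (x - z) i 0)^-1 *: negp (x - z))) (col k A).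
Proof.
move=> sx Zz zmin pk [_ [e e0 [w sw Aw]]]; have [sz _] := Zz.
have tE := simplex_sum_negp sx sz.
set p := posp (x - z) in pk tE *; set q := negp (x - z) in Aw tE *.
set t := \sum_i q i 0 in Aw tE *.
have t0 : 0 < t.
  by rewrite tE (bigD1 k) //= ltr_wpDr // sumr_ge0 // => i _; exact: posp_ge0.
pose a := e / (1 + e); have e1 : 0 < 1 + e by lra.
have a0 : 0 < a by rewrite divr_gt0.
have a1 : a <= 1 by rewrite ler_pdivrMr // mul1r; lra.
pose v := a *: delta_mx k 0 + (1 - a) *: w.
have sv : simplex v by apply: simplex_cvx => //; [exact: simplex_delta | rewrite ltW].
have Av : A *m v = t^-1 *: (A *m q).
  rewrite mulmxDr -!scalemxAr -colE Aw -scalemxAr.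
  by apply/matrixP => i j; rewrite !mxE /a; field; rewrite !gt_eqF.
pose theta := Num.min 1 (p k 0 / (t * a)).
have ta0 : 0 < t * a by rewrite mulr_gt0.
have th0 : 0 < theta by rewrite lt_min ltr01 divr_gt0.
have th1 : theta <= 1 by rewrite ge_min lexx.
have thk : 0 < theta * t * a <= p k 0.
  by rewrite -mulrA mulr_gt0 //= -ler_pdivlMr // ge_min lexx orbT.
have qz i : 0 <= q i 0 <= z i 0 by rewrite negp_ge0 negp_subr_le // ?sx.1 ?sz.1.
have Zz2 : Zset A u (z - theta *: q + (theta * t) *: v).
  by apply: Zset_exchange => //; rewrite ltW.
apply/negP: (zmin _ Zz2); rewrite -ltNge.
have -> : x - (z - theta *: q + (theta * t) *: v) = (x - z) + theta *: q - (theta * t) *: v.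
  by apply/matrixP => i j; rewrite !mxE; ring.
rewrite -{1}(posp_subr_negp (x - z)) -/p -/q [X in _ < X]l1norm_posp_negp -/p -/q.
by apply: l1norm_exchange_lt => //; [exact: posp_ge0 | exact: negp_ge0 | rewrite ltW | rewrite ltW].
Qed.

Variable Nm : 'cV[R]_m -> R.
Hypothesis normNm : is_norm Nm.

Lemma setdist_ge0 F G : 0 <= setdist Nm F G.
Proof. by apply: inf_ge0 => r [v [w [_ _ ->]]]; exact: normv_ge0. Qed.

Lemma setdist_le F G v w : F v -> G w -> setdist Nm F G <= Nm (v - w).
Proof.
move=> Fv Gw; apply: ge_inf; last by exists v, w.
by exists 0 => r [v' [w' [_ _ ->]]]; exact: normv_ge0.
Qed.

Lemma facial_dist_ge0 : 0 <= facial_dist Nm A.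
Proof. by apply: inf_ge0 => r [F [_ _ _ ->]]; exact: setdist_ge0. Qed.

Lemma facial_dist_le F : is_face (convhullA A) F -> F != set0 -> F != convhullA A ->
  facial_dist Nm A <= setdist Nm F (convAminus A F).
Proof.
move=> fF F0 FC; apply: ge_inf; last by exists F.
by exists 0 => r [F' [_ _ _ ->]]; exact: setdist_ge0.
Qed.

Lemma l1_closest_face u x z :
  simplex x -> Zset A u z -> (forall z', Zset A u z' -> l1norm (x - z) <= l1norm (x - z')) ->
  x != z ->
  exists G, [/\ is_face (convhullA A) G, G != set0, G != convhullA A &
    setdist Nm G (convAminus A G) * l1norm (x - z) <= 2 * Nm (A *m x - u)].
Proof.
move=> sx Zz zmin xz; have [sz Az] := Zz.
have tE := simplex_sum_negp sx sz; have l1E := l1norm_posp_negp (x - z).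
set p := posp (x - z) in tE l1E *; set q := negp (x - z) in tE l1E *.
set t := \sum_i q i 0 in tE l1E *.
have t0 : 0 < t.
  have : 0 < l1norm (x - z) by apply: (normv_gt0 (l1norm_is_norm n)); rewrite subr_eq0.
  by rewrite l1E -tE; lra.
have sp : simplex (t^-1 *: p).
  by rewrite tE; apply: simplex_normalize => [i|]; [exact: posp_ge0 | rewrite -tE].
have sq : simplex (t^-1 *: q) by apply: simplex_normalize => // i; exact: negp_ge0.
have Cq : convhullA A (A *m (t^-1 *: q)) by exists (t^-1 *: q).
have notG j : 0 < p j 0 -> ~ minface (convhullA A) (A *m (t^-1 *: q)) (col j A).
  exact: l1_closest_col_notin_minface sx Zz zmin.
have [k pk] : exists k, 0 < p k 0.
  by have [k] := simplex_exists_gt0 sp; rewrite mxE pmulr_rgt0 ?invr_gt0 //; exists k.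
set G := minface (convhullA A) (A *m (t^-1 *: q)) in notG *.
have Gq : G (A *m (t^-1 *: q)) by exact: minface_self.
exists G; split.
- exact: minface_is_face (@convhullA_cvx _ _ A) Cq.
- by apply/eqP => G0; move: Gq; rewrite G0.
- by apply/eqP => GC; apply: (notG k pk); rewrite GC; exact: convhullA_col.
have Cp : convAminus A G (A *m (t^-1 *: p)).
  exists (t^-1 *: p) => //; split=> // j Gj; rewrite mxE.
  have := posp_ge0 (x - z) j; rewrite le_eqVlt => /orP[/eqP <-|pj]; first by rewrite mulr0.
  by case: (notG j pj).
have -> : A *m x - u = t *: (A *m (t^-1 *: p) - A *m (t^-1 *: q)).
  rewrite -Az -mulmxBr -(posp_subr_negp (x - z)) -/p -/q -!scalemxAr -scalerBr scalerA.
  by rewrite mulfV ?gt_eqF // scale1r mulmxBr.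
have [_ hZ _] := normNm; rewrite hZ gtr0_norm // l1E -tE normv_distC //.
have := setdist_le Gq Cp; nra.
Qed.

Lemma facial_dist_l1_le u x z :
  simplex x -> Zset A u z -> (forall z', Zset A u z' -> l1norm (x - z) <= l1norm (x - z')) ->
  facial_dist Nm A * l1norm (x - z) <= 2 * Nm (A *m x - u).
Proof.
move=> sx Zz zmin; have [->|xz] := eqVneq x z.
  by rewrite subrr (normv0 (l1norm_is_norm n)) mulr0 mulr_ge0 ?normv_ge0.
have [G [fG G0 GC hG]] := l1_closest_face sx Zz zmin xz.
by apply: le_trans hG; rewrite ler_wpM2r ?l1norm_ge0 ?facial_dist_le.
Qed.

Lemma exists_proper_face : (exists i j, col i A != col j A) ->
  exists F, [/\ is_face (convhullA A) F, F != set0 & F != convhullA A].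
Proof.
move=> [i [j cij]].
have [z [Zz zmin]] := Zset_argmin (convhullA_col A i)
  (lipschitz_reflect (delta_mx j 0) (@lipschitz_l1norm n)).
have xz : delta_mx j 0 != z by apply: contra cij => /eqP jz; rewrite -Zz.2 -jz -colE.
by have [G [? ? ? _]] := l1_closest_face (simplex_delta j) Zz zmin xz; exists G.
Qed.

Definition face_cols F : {set 'I_n} := [set j | `[< F (col j A) >]].

(* The distance between the convex hulls of the columns indexed by [I] and by
   its complement (see [simplex_diff_sign_penaltyP]). *)
Definition column_separation (I : {set 'I_n}) : R :=
  inf [set Nm (A *m v) | v in [set v | sign_penalty I (-1) v <= 0]].

Lemma exists_col_notin_face F : is_face (convhullA A) F -> F != convhullA A ->
  exists j, ~ F (col j A).
Proof.
move=> [FsubC cvxF _] FC; apply/existsNP => Fcols; move/eqP: FC; apply.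
by apply/seteqP; split=> // _ [l sl <-]; apply: cvx_mulmx_simplex => // j _; exact: Fcols.
Qed.

Lemma convAminus_col F j : ~ F (col j A) -> convAminus A F (col j A).
Proof.
move=> Fj; exists (delta_mx j 0); last by rewrite colE.
by split=> [|i Fi]; [exact: simplex_delta | rewrite mxE; case: eqP Fi => // ->].
Qed.

Lemma face_cols_diff F v w : is_face (convhullA A) F -> F v -> convAminus A F w ->
  exists2 d, sign_penalty (face_cols F) (-1) d <= 0 & v - w = A *m d.
Proof.
move=> fF Fv [mu [smu muF] <-]; have [FsubC _ _] := fF; have [l sl Al] := FsubC _ Fv.
exists (l - mu); last by rewrite mulmxBr Al.
apply/simplex_diff_sign_penaltyP; exists l, mu; split=> // i; rewrite inE => /asboolP.
  by have := sl.1 i; rewrite le_eqVlt => /orP[/eqP <- //|li] /(_ (face_col fF sl _ li)); rewrite Al.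
exact: muF.
Qed.

Lemma column_separation_le F : is_face (convhullA A) F -> F != set0 -> F != convhullA A ->
  column_separation (face_cols F) <= setdist Nm F (convAminus A F).
Proof.
move=> fF /set0P[v Fv] FC; have [j Fj] := exists_col_notin_face fF FC.
apply: lb_le_inf => [|_ [v' [w [Fv' Cw ->]]]].
  by exists (Nm (v - col j A)), v, (col j A); split=> //; exact: convAminus_col.
have [d hd ->] := face_cols_diff fF Fv' Cw.
apply: ge_inf; last by exists d.
by exists 0 => _ [d' _ <-]; exact: normv_ge0.
Qed.

(* If the minimizer had [A (l - mu) = 0], the point [A l = A mu] of [F] would
   force a column charged by [mu] into [F]. *)
Lemma column_separation_gt0 F : is_face (convhullA A) F -> F != set0 -> F != convhullA A ->
  0 < column_separation (face_cols F).
Proof.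
move=> fF /set0P[v Fv] FC; have [_ cvxF _] := fF; set I := face_cols F.
have IP j : reflect (F (col j A)) (j \in I) by rewrite inE; exact: asboolP.
have [j Fj] := exists_col_notin_face fF FC.
have [d0 hd0 _] := face_cols_diff fF Fv (convAminus_col Fj).
have [d [hd dmin]] := @sublevel_argmin _ (sign_penalty I (-1)) (fun d => Nm (A *m d - 0))
  (1 + `|-1|) (lipschitz_sign_penalty I (-1)) (lipschitz_normv_affine A 0 normNm)
  (ex_intro _ d0 hd0) (fun d hd i => sign_penalty_coord_le i hd).
have Ad_gt0 : 0 < Nm (A *m d).
  apply: normv_gt0 => //; apply/eqP => Ad0.
  have [l [mu [sl smu lI muI dE]]] := proj1 (simplex_diff_sign_penaltyP I d) hd.
  have Fl : F (A *m l).
    by apply: cvx_mulmx_simplex => // i li; apply/IP; apply: contraTT li => /lI ->; rewrite negbK.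
  have Alm : A *m l = A *m mu by apply/eqP; rewrite -subr_eq0 -mulmxBr -dE Ad0.
  have [k muk] := simplex_exists_gt0 smu.
  have /IP kI := face_col fF smu (eq_ind _ F Fl _ Alm) muk.
  by move: muk; rewrite muI // ltxx.
apply: lt_le_trans Ad_gt0 _; apply: lb_le_inf => [|_ [d' hd' <-]]; first by exists (Nm (A *m d)), d.
by have := dmin d' hd'; rewrite !subr0.
Qed.

Lemma facial_dist_gt0 : (exists F, [/\ is_face (convhullA A) F, F != set0 & F != convhullA A]) ->
  0 < facial_dist Nm A.
Proof.
move=> [F0 [fF0 F00 F0C]].
pose d := \big[Num.min/1]_(I : {set 'I_n} | 0 < column_separation I) column_separation I.
have d0 : 0 < d.
  by rewrite /d; elim/big_ind: _ => // x y x0 y0; rewrite lt_min x0 y0.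
apply: lt_le_trans d0 _; apply: lb_le_inf; first by exists (setdist Nm F0 (convAminus A F0)), F0.
move=> _ [F [fF F0' FC ->]]; apply: le_trans (column_separation_le fF F0' FC).
exact: bigmin_le_cond (column_separation_gt0 fF F0' FC).
Qed.

End FacialBound.

Lemma normv_ge_l1 k (N : 'cV[R]_k -> R) : is_norm N ->
  exists2 c, 0 < c & forall w, c * l1norm w <= N w.
Proof.
case: k N => [|k] N normN.
  by exists 1 => // w; rewrite /l1norm big_ord0 mulr0 normv_ge0.
pose h (w : 'cV[R]_k.+1) := `|l1norm w - 1|.
have hP w : h w <= 0 <-> l1norm w = 1 by rewrite normr_le0 subr_eq0; split=> /eqP.
have [|w /hP w1 i|w [/hP w1 wmin]] :=
  @sublevel_argmin _ h N 1 (lipschitz_normrB 1 (@lipschitz_l1norm _)) (lipschitz_normv normN).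
- exists (delta_mx ord0 0); apply/hP; rewrite -[RHS](@sum_delta_mx k.+1 ord0).
  by apply: eq_bigr => i _; rewrite ger0_norm // mxE ler0n.
- by rewrite -w1 ler_coord_l1norm.
have w0 : w != 0.
  apply/eqP => w0; move: w1; rewrite w0 (normv0 (l1norm_is_norm _)) => /eqP.
  by rewrite eq_sym oner_eq0.
exists (N w) => [|v]; first exact: normv_gt0.
have [v0|v0] := eqVneq (l1norm v) 0; first by rewrite v0 mulr0 normv_ge0.
have lv : 0 < l1norm v by rewrite lt_neqAle eq_sym v0 l1norm_ge0.
have li : 0 <= (l1norm v)^-1 by rewrite invr_ge0 ltW.
have hv : l1norm ((l1norm v)^-1 *: v) = 1 by rewrite l1normZ (ger0_norm li) mulVf.
have := wmin _ (proj2 (hP _) hv); case: normN => _ hZ _.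
by rewrite hZ (ger0_norm li) mulrC ler_pdivlMr.
Qed.

Section RatioMax.
Variables (m n : nat) (Nm : 'cV[R]_m -> R) (Nn : 'cV[R]_n -> R) (A : 'M[R]_(m, n)).
Hypotheses (normNm : is_norm Nm) (normNn : is_norm Nn).

Lemma ratio_bounded : exists M, forall w : 'cV[R]_n, w != 0 ->
  Nm (A *m w) ^+ 2 / Nn w ^+ 2 <= M.
Proof.
have [c c0 hc] := normv_ge_l1 normNn; pose S := \sum_k Nm (col k A).
have S0 : 0 <= S by apply: sumr_ge0 => k _; exact: normv_ge0.
exists ((S / c) ^+ 2) => w w0; have Nw := normv_gt0 normNn w0.
have h1 : Nm (A *m w) <= l1norm w * S.
  apply: le_trans (ler_normv_mulmx normNm A w) _; rewrite mulr_sumr.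
  by apply: ler_sum => k _; apply: ler_wpM2r; [exact: normv_ge0 | exact: ler_coord_l1norm].
have h2 : l1norm w <= Nn w / c by rewrite ler_pdivlMr // mulrC hc.
have hw : Nm (A *m w) <= S / c * Nn w.
  by apply: le_trans h1 _; rewrite mulrC mulrAC -mulrA; apply: ler_wpM2l.
rewrite ler_pdivrMr ?exprn_gt0 // -exprMn !expr2.
by apply: ler_pM (hw) (hw); exact: normv_ge0.
Qed.

Lemma ratio_max_ub (w : 'cV[R]_n) : w != 0 -> \sum_i w i 0 = 0 ->
  Nm (A *m w) ^+ 2 <= ratio_max Nm Nn A * Nn w ^+ 2.
Proof.
move=> w0 sw; have [M hM] := ratio_bounded.
rewrite -ler_pdivrMr ?exprn_gt0 ?normv_gt0 //; apply: sup_upper_bound; last by exists w.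
by split; [exists (Nm (A *m w) ^+ 2 / Nn w ^+ 2), w | exists M => _ [w' [w'0 _ ->]]; exact: hM].
Qed.

Lemma ratio_max_ge0 : 0 <= ratio_max Nm Nn A.
Proof.
rewrite /ratio_max; set E := [set r | _].
have [[_ [w [w0 sw _]]]|/set0P/negP/negPn/eqP ->] := pselect (E !=set0); last by rewrite sup0.
have := ratio_max_ub w0 sw; rewrite -ler_pdivrMr ?exprn_gt0 ?normv_gt0 //.
by apply: le_trans; rewrite divr_ge0 ?exprn_ge0 ?normv_ge0.
Qed.

End RatioMax.

Section BasisBound.
Variables (n : nat) (Nn : 'cV[R]_n -> R).
Hypothesis normNn : is_norm Nn.

Lemma max_basis_sq_gt0 : (0 < n)%N -> 0 < max_basis_sq Nn.
Proof.
move=> n0; apply: lt_le_trans (le_bigmax _ _ (Ordinal n0)); rewrite exprn_gt0 // normv_gt0 //.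
by apply/eqP => /matrixP/(_ (Ordinal n0) 0); rewrite !mxE !eqxx => /eqP; rewrite oner_eq0.
Qed.

Lemma normv_sqr_le_l1 v : Nn v ^+ 2 <= max_basis_sq Nn * l1norm v ^+ 2.
Proof.
have mb0 : 0 <= max_basis_sq Nn by exact: bigmax_ge_id.
have he i : Nn (delta_mx i 0) <= Num.sqrt (max_basis_sq Nn).
  rewrite -(ger0_norm (normv_ge0 normNn (delta_mx i 0))) -sqrtr_sqr ler_sqrt //.
  exact: le_bigmax.
have hv : Nn v <= Num.sqrt (max_basis_sq Nn) * l1norm v.
  apply: le_trans (ler_normv_l1 normNn v) _; rewrite mulr_sumr.
  by apply: ler_sum => i _; rewrite mulrC ler_wpM2r.
by rewrite -(sqr_sqrtr mb0) -exprMn !expr2 ler_pM // normv_ge0.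
Qed.

End BasisBound.

Lemma distZ_attained m n (Nn : 'cV[R]_n -> R) (A : 'M[R]_(m, n)) x u :
  is_norm Nn -> convhullA A u -> exists z, [/\ Zset A u z, distZ Nn A x u = Nn (x - z) &
    forall z', Zset A u z' -> Nn (x - z) <= Nn (x - z')].
Proof.
move=> normNn Cu; have [z [Zz zmin]] := Zset_argmin Cu (lipschitz_normv_dist x normNn).
exists z; split=> //; apply/eqP; rewrite eq_le; apply/andP; split.
  apply: ge_inf; last by exists z.
  by exists 0 => _ [z' [_ ->]]; exact: normv_ge0.
by apply: lb_le_inf => [|_ [z' [Zz' ->]]]; [exists (Nn (x - z)), z | exact: zmin].
Qed.

Lemma smooth_bregman_le m (Nm : 'cV[R]_m -> R) f C (Lf : R) u v :
  smooth_on Nm f C Lf -> C u -> C v -> 2 * bregman f u v <= Lf * Nm (v - u) ^+ 2.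
Proof. by move=> hf Cu Cv; have := hf u v Cu Cv; rewrite /bregman; lra. Qed.

Lemma strongly_convex_bregman_ge m (Nm : 'cV[R]_m -> R) f C (muf : R) u v :
  strongly_convex_on Nm f C muf -> C u -> C v -> muf * Nm (v - u) ^+ 2 <= 2 * bregman f u v.
Proof. by move=> hf Cu Cv; have := hf u v Cu Cv; rewrite /bregman; lra. Qed.

Section RelativeConstants.
Variables (m n : nat) (Nm : 'cV[R]_m -> R) (Nn : 'cV[R]_n -> R) (A : 'M[R]_(m, n)).
Variable f : 'cV[R]_m -> R.
Hypotheses (normNm : is_norm Nm) (normNn : is_norm Nn).
Variables (u : 'cV[R]_m) (x : 'cV[R]_n).
Hypotheses (Cu : convhullA A u) (sx : simplex x) (xZ : ~ Zset A u x).

Lemma bregman_ratio_le (Lf : R) : 0 <= Lf -> smooth_on Nm f (convhullA A) Lf ->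
  2 * bregman f u (A *m x) / distZ Nn A x u ^+ 2 <= Lf * ratio_max Nm Nn A.
Proof.
move=> Lf0 hf; have [z [[sz Az] -> _]] := distZ_attained x normNn Cu.
have xz : x - z != 0 by rewrite subr_eq0; apply/eqP => ex; apply: xZ; rewrite ex.
rewrite ler_pdivrMr ?exprn_gt0 ?normv_gt0 // -mulrA.
apply: le_trans (smooth_bregman_le hf Cu (ex_intro2 _ _ x sx erefl)) _.
by rewrite -Az -mulmxBr ler_wpM2l // ratio_max_ub // sum_simplex_subr.
Qed.

Lemma bregman_ratio_ge (muf : R) : 0 <= muf -> strongly_convex_on Nm f (convhullA A) muf ->
  muf * facial_dist Nm A ^+ 2 / (4 * max_basis_sq Nn) <=
  2 * bregman f u (A *m x) / distZ Nn A x u ^+ 2.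
Proof.
move=> muf0 hf; have [z [[sz Az] -> zmin]] := distZ_attained x normNn Cu.
have [z1 [Zz1 z1min]] := Zset_argmin Cu (lipschitz_reflect x (@lipschitz_l1norm n)).
have d0 : 0 < Nn (x - z).
  by rewrite normv_gt0 // subr_eq0; apply/eqP => ex; apply: xZ; rewrite ex.
have mb0 : 0 < max_basis_sq Nn.
  have [j _] := simplex_exists_gt0 sx; apply: (max_basis_sq_gt0 normNn).
  exact: leq_ltn_trans (leq0n j) (ltn_ord j).
set P := facial_dist Nm A; set L := l1norm (x - z1); set N := Nm (A *m x - u).
have P0 : 0 <= P := facial_dist_ge0 A normNm.
have PL : P * L <= 2 * N := facial_dist_l1_le normNm sx Zz1 z1min.
have dL : Nn (x - z) ^+ 2 <= max_basis_sq Nn * L ^+ 2.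
  apply: le_trans (normv_sqr_le_l1 normNn _); rewrite !expr2.
  by apply: ler_pM (zmin _ Zz1) (zmin _ Zz1); exact: normv_ge0.
have bN : muf * N ^+ 2 <= 2 * bregman f u (A *m x).
  exact: strongly_convex_bregman_ge hf Cu (ex_intro2 _ _ x sx erefl).
have mb4 : 0 < 4 * max_basis_sq Nn by rewrite mulr_gt0.
rewrite ler_pdivlMr ?exprn_gt0 // mulrAC ler_pdivrMr //.
apply: le_trans (_ : muf * P ^+ 2 * (max_basis_sq Nn * L ^+ 2) <= _).
  by rewrite ler_wpM2l ?mulr_ge0 ?exprn_ge0.
have PL2 : (P * L) ^+ 2 <= (2 * N) ^+ 2.
  by rewrite !expr2; apply: ler_pM (PL) (PL); rewrite mulr_ge0 ?l1norm_ge0.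
have -> : muf * P ^+ 2 * (max_basis_sq Nn * L ^+ 2) = max_basis_sq Nn * muf * (P * L) ^+ 2.
  by ring.
apply: le_trans (_ : max_basis_sq Nn * muf * (2 * N) ^+ 2 <= _).
  by rewrite ler_wpM2l // mulr_ge0 // (ltW mb0).
have -> : max_basis_sq Nn * muf * (2 * N) ^+ 2 = 4 * max_basis_sq Nn * (muf * N ^+ 2) by ring.
by rewrite [X in _ <= X]mulrC; apply: ler_wpM2l => //; rewrite mulr_ge0 // (ltW mb0).
Qed.

End RelativeConstants.

Lemma fine_sup_div_inf_le (S : set \bar R) (a b : R) :
  (exists r : R, S r%:E) -> (ereal_sup S <= a%:E)%E -> (b%:E <= ereal_inf S)%E ->
  0 <= a -> 0 < b -> fine (ereal_sup S) / fine (ereal_inf S) <= a / b.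
Proof.
move=> [r Sr] + + a0 b0; have := ereal_sup_ubound Sr; have := ereal_inf_lbound Sr.
case: (ereal_inf S) => [i| |] //; case: (ereal_sup S) => [s| |] //= _ _.
rewrite !lee_fin => sa bi; have i0 : 0 < i := lt_le_trans b0 bi.
apply: (@le_trans _ _ (a / i)); first by rewrite ler_pM2r ?invr_gt0.
by rewrite ler_wpM2l // lef_pV2 ?posrE.
Qed.

End Development.

Theorem corollary3 (R : realType) (m n : nat)
  (Nm : 'cV[R]_m -> R) (Nn : 'cV[R]_n -> R) (A : 'M[R]_(m, n))
  (f : 'cV[R]_m -> R) (D : set 'cV[R]_m) (Lf muf : R) :
  is_norm Nm -> is_norm Nn ->
  (exists i j : 'I_n, matrix.col i A != matrix.col j A) ->
  open D -> cvx_set D -> cvx_on D f -> (forall u, D u -> differentiable f u) ->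
  convhullA A `<=` D ->
  0 < Lf -> 0 <= muf ->
  smooth_on Nm f (convhullA A) Lf -> strongly_convex_on Nm f (convhullA A) muf ->
  [/\ (LfA Nn f A <= (Lf * ratio_max Nm Nn A)%:E)%E,
      ((muf * facial_dist Nm A ^+ 2 / (4 * max_basis_sq Nn))%:E <= muFA Nn f A)%E &
      (0 < muf ->
        fine (LfA Nn f A) / fine (muFA Nn f A) <=
        Lf / muf * (4 * max_basis_sq Nn / facial_dist Nm A ^+ 2) * ratio_max Nm Nn A)].
Proof.
move=> normNm normNn cols _ _ _ _ _ Lf0 muf0 smooth sconvex.
have LfA_le : (LfA Nn f A <= (Lf * ratio_max Nm Nn A)%:E)%E.
  apply: ge_ereal_sup => _ [u [x [Cu sx xZ ->]]]; rewrite lee_fin.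
  exact: bregman_ratio_le (ltW Lf0) smooth.
have muFA_ge : ((muf * facial_dist Nm A ^+ 2 / (4 * max_basis_sq Nn))%:E <= muFA Nn f A)%E.
  apply: le_ereal_inf_tmp => _ [u [x [Cu sx xZ ->]]]; rewrite lee_fin.
  exact: bregman_ratio_ge muf0 sconvex.
split=> // muf_gt0; have [i [j cij]] := cols.
have P0 := facial_dist_gt0 normNm (exists_proper_face normNm cols).
have mb0 := max_basis_sq_gt0 normNn (leq_ltn_trans (leq0n i) (ltn_ord i)).
have xZ : ~ Zset A (col i A) (delta_mx j 0).
  by case=> _; rewrite -colE => /eqP; rewrite eq_sym (negbTE cij).
have -> : Lf / muf * (4 * max_basis_sq Nn / facial_dist Nm A ^+ 2) * ratio_max Nm Nn A =
    Lf * ratio_max Nm Nn A / (muf * facial_dist Nm A ^+ 2 / (4 * max_basis_sq Nn)).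
  by field; rewrite !gt_eqF ?exprn_gt0.
apply: fine_sup_div_inf_le LfA_le muFA_ge _ _.
- exists (2 * bregman f (col i A) (A *m delta_mx j 0) / distZ Nn A (delta_mx j 0) (col i A) ^+ 2).
  by exists (col i A), (delta_mx j 0); split; [exact: convhullA_col | exact: simplex_delta | |].
- by rewrite mulr_ge0 ?(ltW Lf0) ?(ratio_max_ge0 A normNm normNn).
- by rewrite divr_gt0 ?mulr_gt0 ?exprn_gt0.
Qed.
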